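(* Let $n\ge3$ and let $K_0:[0,\infty)\to[0,\infty)$ be bounded and continuous with $K_0(0)>0$. Then there is a constant $M>0$ such that every radially symmetric nonnegative $C^2$ solution $v$ of $$\Delta v+K_0(|x|)\,v^{\frac{n}{n-2}}=0\ \text{in }\mathbb{R}^n,\qquad \lim_{|x|\to\infty}v(x)=\beta,$$ with any $\beta>0$, satisfies $v\le M$ on $\mathbb{R}^n$; $M$ does not depend on $\beta$. *)

(* classical reals. Points of R^n are represented as
   x : nat -> R, of which only the coordinates x 0, ..., x (n-1) matter. *)
From Stdlib Require Import Reals.
Open Scope R_scope.

Fixpoint sum_upto (n : nat) (f : nat -> R) : R :=
  match n with
  | O => 0
  | S m => sum_upto m f + f m
  end.

Definition normn (n : nat) (x : nat -> R) : R :=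
  sqrt (sum_upto n (fun i => x i * x i)).

Definition subv (x y : nat -> R) : nat -> R := fun i => x i - y i.

Definition shift (x : nat -> R) (i : nat) (t : R) : nat -> R :=
  fun j => if Nat.eqb j i then x j + t else x j.

Definition has_partial (f : (nat -> R) -> R) (i : nat) (x : nat -> R) (l : R) : Prop :=
  derivable_pt_lim (fun t => f (shift x i t)) 0 l.

Definition contn (n : nat) (f : (nat -> R) -> R) : Prop :=
  forall x eps, 0 < eps -> exists delta, 0 < delta /\
    forall y, normn n (subv y x) < delta -> Rabs (f y - f x) < eps.

(* f is C^2 on R^n, with first partials D1 i and second partials D2 i j
   (D2 i j = d/dx_j (d f/dx_i)); all continuous *)
Definition C2n (n : nat) (f : (nat -> R) -> R)
  (D1 : nat -> (nat -> R) -> R) (D2 : nat -> nat -> (nat -> R) -> R) : Prop :=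
  contn n f /\
  (forall i, (i < n)%nat -> contn n (D1 i) /\ forall x, has_partial f i x (D1 i x)) /\
  (forall i j, (i < n)%nat -> (j < n)%nat ->
     contn n (D2 i j) /\ forall x, has_partial (D1 i) j x (D2 i j x)).

Definition laplacian (n : nat) (D2 : nat -> nat -> (nat -> R) -> R) (x : nat -> R) : R :=
  sum_upto n (fun i => D2 i i x).

(* a^p for a >= 0, p > 0, with 0^p = 0 *)
Definition rpow (a p : R) : R := if Rle_dec a 0 then 0 else Rpower a p.

Definition radially_symmetric (n : nat) (f : (nat -> R) -> R) : Prop :=
  forall x y, normn n x = normn n y -> f x = f y.

(* Along a ray, v(r e_0) = u(r) solves u'' + (n-1)/r u' + K0 u^p = 0 with u'(0) = 0 and
   p = n/(n-2), so the flux G = -r^(n-1) u' is nondecreasing, u is nonincreasing and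
   u >= beta > 0. Let a = u(0). Integrating G' = r^(n-1) K0 u^p <= B a^p r^(n-1) shows
   u >= a/2 up to the radius rho with B a^p rho^2 = n a, and then K0 >= k near 0 gives
   G(rho) >= c0 with c0 independent of a. Since u decreases to a nonnegative limit,
   u(r) >= G(r) / ((n-2) r^(n-2)); hence G' >= c G^p / r near 0, i.e. G^(-q) + q c ln r
   is nonincreasing for q = p - 1. This yields q c ln (delta / rho) <= c0^(-q), and as
   ln rho = (ln n - ln B - q ln a) / 2 it bounds ln a independently of beta. *)

From Stdlib Require Import Reals Lra Lia Psatz FunctionalExtensionality.
Open Scope R_scope.

Lemma nonincreasing_of_deriv_nonpos (f f' : R -> R) a b : a <= b ->
  (forall c, a <= c <= b -> derivable_pt_lim f c (f' c)) ->
  (forall c, a <= c <= b -> f' c <= 0) -> f b <= f a.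
Proof.
  intros [Hab|<-] Hd Hneg; [|lra].
  destruct (MVT_cor2 f f' a b Hab Hd) as [c [Hc Hcab]].
  assert (f' c <= 0) by (apply Hneg; lra).
  nra.
Qed.

Lemma nondecreasing_of_deriv_nonneg (f f' : R -> R) a b : a <= b ->
  (forall c, a <= c <= b -> derivable_pt_lim f c (f' c)) ->
  (forall c, a <= c <= b -> 0 <= f' c) -> f a <= f b.
Proof.
  intros Hab Hd Hpos.
  enough (- f b <= - f a) by lra.
  apply (nonincreasing_of_deriv_nonpos (fun s => - f s) (fun s => - f' s) a b Hab).
  - intros c Hc. apply derivable_pt_lim_opp, Hd, Hc.
  - intros c Hc. specialize (Hpos c Hc). lra.
Qed.

Lemma derivable_pt_lim_add f g x a b : derivable_pt_lim f x a -> derivable_pt_lim g x b ->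
  derivable_pt_lim (fun s => f s + g s) x (a + b).
Proof. exact (derivable_pt_lim_plus f g x a b). Qed.

Lemma derivable_pt_lim_mul f g x a b : derivable_pt_lim f x a -> derivable_pt_lim g x b ->
  derivable_pt_lim (fun s => f s * g s) x (a * g x + f x * b).
Proof. exact (derivable_pt_lim_mult f g x a b). Qed.

Lemma derivable_pt_lim_scale c f x a : derivable_pt_lim f x a ->
  derivable_pt_lim (fun s => c * f s) x (c * a).
Proof. exact (derivable_pt_lim_scal f c x a). Qed.

Lemma derivable_pt_lim_compose f g x a b : derivable_pt_lim f x a ->
  derivable_pt_lim g (f x) b -> derivable_pt_lim (fun s => g (f s)) x (b * a).
Proof. exact (derivable_pt_lim_comp f g x a b). Qed.

Lemma derivable_pt_lim_eq f x a b : a = b -> derivable_pt_lim f x a -> derivable_pt_lim f x b.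
Proof. now intros ->. Qed.

Lemma le_pow_of_deriv_le (f f' : R -> R) A k r : 0 <= r -> f 0 = 0 ->
  (forall s, 0 <= s <= r -> derivable_pt_lim f s (f' s)) ->
  (forall s, 0 <= s <= r -> f' s <= A * s ^ k) ->
  f r <= A * r ^ S k / INR (S k).
Proof.
  intros Hr Hf0 Hd Hle.
  assert (HSk : 0 < INR (S k)) by apply lt_0_INR, Nat.lt_0_succ.
  set (g := fun s => f s - A / INR (S k) * s ^ S k).
  enough (g r <= g 0) by (unfold g in *; rewrite pow_i, Hf0 in * by lia; unfold Rdiv in *; lra).
  apply (nonincreasing_of_deriv_nonpos g (fun s => f' s - A / INR (S k) * (INR (S k) * s ^ k))
    0 r Hr).
  - intros s Hs. apply derivable_pt_lim_minus; [now apply Hd|].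
    apply derivable_pt_lim_scale, derivable_pt_lim_pow.
  - intros s Hs. specialize (Hle s Hs).
    replace (A / INR (S k) * (INR (S k) * s ^ k)) with (A * s ^ k) by (field; lra). lra.
Qed.

Lemma ge_pow_of_deriv_ge (f f' : R -> R) A k r : 0 <= r -> f 0 = 0 ->
  (forall s, 0 <= s <= r -> derivable_pt_lim f s (f' s)) ->
  (forall s, 0 <= s <= r -> A * s ^ k <= f' s) ->
  A * r ^ S k / INR (S k) <= f r.
Proof.
  intros Hr Hf0 Hd Hge.
  enough (- f r <= - A * r ^ S k / INR (S k)) by (unfold Rdiv in *; lra).
  apply (le_pow_of_deriv_le (fun s => - f s) (fun s => - f' s)); auto.
  - lra.
  - intros s Hs. apply derivable_pt_lim_opp, Hd, Hs.
  - intros s Hs. specialize (Hge s Hs). lra.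
Qed.

Lemma rpow_Rpower a p : 0 < a -> rpow a p = Rpower a p.
Proof. intros Ha. unfold rpow. destruct (Rle_dec a 0); [lra|reflexivity]. Qed.

Lemma rpow_ge0 a p : 0 <= rpow a p.
Proof. unfold rpow. destruct (Rle_dec a 0); [lra|left; apply exp_pos]. Qed.

Lemma rpow_le_compat a b p : 0 <= p -> a <= b -> rpow a p <= rpow b p.
Proof.
  intros Hp Hab. unfold rpow.
  destruct (Rle_dec a 0), (Rle_dec b 0); try lra.
  - left; apply exp_pos.
  - apply Rle_Rpower_l; lra.
Qed.

Lemma Rpower_gt0 a p : 0 < Rpower a p.
Proof. apply exp_pos. Qed.

Lemma INR_sub2 n : (3 <= n)%nat -> INR (n - 2) = INR n - 2.
Proof. intros. rewrite minus_INR by lia. simpl. lra. Qed.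

Lemma INR_ge3 n : (3 <= n)%nat -> 3 <= INR n.
Proof. intros. replace 3 with (INR 3) by (simpl; ring). now apply le_INR. Qed.

Lemma exists_large_Rpower_opp_lt m c eps x0 : 1 <= m -> 0 <= c -> 0 < eps ->
  exists S, x0 <= S /\ c * Rpower S (- m) < eps.
Proof.
  intros Hm Hc Heps.
  exists (Rmax x0 (Rmax 1 (c / eps + 1))).
  set (S := Rmax x0 (Rmax 1 (c / eps + 1))).
  assert (HS1 : 1 <= S) by (eapply Rle_trans; [apply Rmax_l|apply Rmax_r]).
  assert (HSc : c / eps + 1 <= S) by (eapply Rle_trans; [apply Rmax_r|apply Rmax_r]).
  split; [apply Rmax_l|].
  assert (Hinv : Rpower S (- m) <= / S).
  { rewrite Rpower_Ropp. apply Rinv_le_contravar; [lra|].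
    rewrite <- (Rpower_1 S) at 1 by lra. apply Rle_Rpower; lra. }
  assert (Hc_lt : c < eps * S).
  { apply (Rmult_lt_reg_r (/ eps)); [now apply Rinv_0_lt_compat|].
    replace (eps * S * / eps) with S by (field; lra). unfold Rdiv in HSc. lra. }
  apply Rle_lt_trans with (c * / S); [now apply Rmult_le_compat_l|].
  apply (Rmult_lt_reg_r S); [lra|]. rewrite Rmult_assoc, Rinv_l by lra. lra.
Qed.

Lemma Rpower_div_mul_pow x y s k p : 0 < x -> 0 < y -> 0 < s ->
  Rpower (x / (y * s ^ k)) p = Rpower x p * Rpower y (- p) * Rpower s (- (INR k * p)).
Proof.
  intros Hx Hy Hs. assert (Hsk : 0 < s ^ k) by now apply pow_lt.
  assert (Hysk : 0 < y * s ^ k) by now apply Rmult_lt_0_compat.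
  unfold Rpower, Rdiv.
  rewrite ln_mult, ln_Rinv, ln_mult, ln_pow by (try apply Rinv_0_lt_compat; assumption).
  rewrite <- !exp_plus. f_equal. ring.
Qed.

Definition flux_decay_const (n : nat) (k : R) : R :=
  k * Rpower (INR n - 2) (- (INR n / INR (n - 2))).

(* [k (a/2)^p rho^n / n] at the radius [rho] where [B a^p rho^2 = n a]; it does not depend on [a]. *)
Definition flux_floor (n : nat) (B k : R) : R :=
  k * Rpower (/ 2) (INR n / INR (n - 2)) * Rpower (INR n / B) (INR n / 2) / INR n.

Definition radial_log_bound (n : nat) (B k delta : R) : R :=
  let q := 2 / (INR n - 2) in
  (ln (INR n) - ln B - 2 * ln delta
   + 2 * Rpower (flux_floor n B k) (- q) / (q * flux_decay_const n k)) / q.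

Section RadialProfile.

Variables (n : nat) (K u U1 U2 : R -> R).

Local Notation N := (INR n).
Local Notation p := (INR n / INR (n - 2)).
Local Notation flux r := (- (r ^ (n - 1) * U1 r)).

Hypothesis n_ge3 : (3 <= n)%nat.
Hypothesis K_ge0 : forall r, 0 <= r -> 0 <= K r.
Hypothesis u_deriv : forall r, derivable_pt_lim u r (U1 r).
Hypothesis U1_deriv : forall r, derivable_pt_lim U1 r (U2 r).
Hypothesis U1_0 : U1 0 = 0.
Hypothesis u_ge0 : forall r, 0 <= r -> 0 <= u r.
Hypothesis profile_ode : forall r, 0 < r ->
  U2 r + (N - 1) * U1 r / r + K r * rpow (u r) p = 0.

Lemma crit_exp_gt0 : 0 < p.
Proof.
  rewrite INR_sub2 by auto. assert (H3 := INR_ge3 n n_ge3).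
  apply Rdiv_lt_0_compat; lra.
Qed.

Lemma flux_deriv r : 0 <= r ->
  derivable_pt_lim (fun s => flux s) r (r ^ (n - 1) * K r * rpow (u r) p).
Proof.
  intros Hr.
  assert (D := derivable_pt_lim_mul _ _ r _ _ (derivable_pt_lim_pow r (n - 1)) (U1_deriv r)).
  apply derivable_pt_lim_opp in D.
  eapply derivable_pt_lim_eq; [|exact D].
  replace (Init.Nat.pred (n - 1)) with (n - 2)%nat by lia.
  rewrite minus_INR by lia.
  assert (Hpow : r ^ (n - 1) = r ^ (n - 2) * r).
  { replace (n - 1)%nat with (S (n - 2)) by lia. simpl. ring. }
  rewrite Hpow. simpl INR.
  destruct Hr as [Hr|<-].
  - assert (E := profile_ode r Hr).
    replace (U2 r) with (- ((N - 1) * U1 r / r) - K r * rpow (u r) p) by lra.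
    field. lra.
  - rewrite pow_i by lia. ring.
Qed.

Lemma flux_nondecreasing a b : 0 <= a <= b -> flux a <= flux b.
Proof.
  intros Hab.
  apply (nondecreasing_of_deriv_nonneg (fun s => flux s)
    (fun s => s ^ (n - 1) * K s * rpow (u s) p) a b); [lra| |].
  - intros c Hc. apply flux_deriv. lra.
  - intros c Hc.
    assert (0 <= c ^ (n - 1)) by (apply pow_le; lra).
    assert (0 <= K c) by (apply K_ge0; lra).
    assert (0 <= rpow (u c) p) by apply rpow_ge0.
    repeat apply Rmult_le_pos; auto.
Qed.

Lemma flux_ge0 r : 0 <= r -> 0 <= flux r.
Proof.
  intros Hr. assert (H := flux_nondecreasing 0 r ltac:(lra)).
  rewrite U1_0 in H. lra.
Qed.

Lemma U1_nonpos r : 0 <= r -> U1 r <= 0.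
Proof.
  intros [Hr|<-]; [|lra].
  assert (H := flux_ge0 r ltac:(lra)).
  assert (0 < r ^ (n - 1)) by (apply pow_lt; lra).
  nra.
Qed.

Lemma u_nonincreasing a b : 0 <= a <= b -> u b <= u a.
Proof.
  intros Hab. apply (nonincreasing_of_deriv_nonpos u U1); [lra| |].
  - intros c _. apply u_deriv.
  - intros c Hc. apply U1_nonpos. lra.
Qed.

Lemma u_ge_limit beta :
  (forall eps, 0 < eps -> exists R0, forall r, 0 <= r -> R0 < r -> Rabs (u r - beta) < eps) ->
  forall r, 0 <= r -> beta <= u r.
Proof.
  intros Hlim r Hr. destruct (Rle_lt_dec beta (u r)) as [|Hlt]; auto.
  destruct (Hlim (beta - u r) ltac:(lra)) as [R0 HR0].
  set (s := Rmax r (R0 + 1)).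
  assert (r <= s) by apply Rmax_l. assert (R0 + 1 <= s) by apply Rmax_r.
  specialize (HR0 s ltac:(lra) ltac:(lra)). apply Rabs_def2 in HR0.
  assert (u s <= u r) by (apply u_nonincreasing; lra).
  lra.
Qed.

Lemma flux_le_center B : (forall r, 0 <= r -> K r <= B) ->
  forall r, 0 <= r -> flux r <= B * rpow (u 0) p * r ^ n / N.
Proof.
  intros HB r Hr.
  assert (H := le_pow_of_deriv_le (fun s => flux s) (fun s => s ^ (n - 1) * K s * rpow (u s) p)
    (B * rpow (u 0) p) (n - 1) r Hr).
  replace (S (n - 1)) with n in H by lia. apply H.
  - rewrite U1_0. ring.
  - intros s Hs. apply flux_deriv. lra.
  - intros s Hs.
    assert (0 <= s ^ (n - 1)) by (apply pow_le; lra).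
    assert (K s * rpow (u s) p <= B * rpow (u 0) p).
    { apply Rmult_le_compat; [apply K_ge0; lra|apply rpow_ge0|apply HB; lra|].
      apply rpow_le_compat; [left; apply crit_exp_gt0|apply u_nonincreasing; lra]. }
    nra.
Qed.

Lemma u_ge_center B : (forall r, 0 <= r -> K r <= B) ->
  forall r, 0 <= r -> u 0 - B * rpow (u 0) p * r ^ 2 / (2 * N) <= u r.
Proof.
  intros HB r Hr.
  assert (HN := INR_ge3 n n_ge3).
  assert (H := le_pow_of_deriv_le (fun s => u 0 - u s) (fun s => - U1 s)
    (B * rpow (u 0) p / N) 1 r Hr).
  replace (B * rpow (u 0) p * r ^ 2 / (2 * N)) with (B * rpow (u 0) p / N * r ^ 2 / INR 2)
    by (simpl; field; lra).
  enough (u 0 - u r <= B * rpow (u 0) p / N * r ^ 2 / INR 2) by lra.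
  apply H.
  - ring.
  - intros s _. apply (derivable_pt_lim_eq _ _ (0 - U1 s)); [ring|].
    apply derivable_pt_lim_minus; [apply derivable_pt_lim_const|apply u_deriv].
  - intros s [[Hs|<-] _]; [|rewrite U1_0; simpl; lra].
    assert (F := flux_le_center B HB s ltac:(lra)).
    assert (Hsn : s ^ n = s ^ (n - 1) * s) by (replace n with (S (n - 1)) at 1 by lia; simpl; ring).
    assert (0 < s ^ (n - 1)) by (apply pow_lt; lra).
    apply (Rmult_le_reg_l (s ^ (n - 1))); auto.
    rewrite Hsn in F. simpl. unfold Rdiv in *. lra.
Qed.

Lemma flux_ge_local k delta : (forall s, 0 <= s <= delta -> k <= K s) ->
  forall r, 0 <= r <= delta -> k * rpow (u r) p * r ^ n / N <= flux r.
Proof.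
  intros Hk r Hr.
  assert (H := ge_pow_of_deriv_ge (fun s => flux s) (fun s => s ^ (n - 1) * K s * rpow (u s) p)
    (k * rpow (u r) p) (n - 1) r (proj1 Hr)).
  replace (S (n - 1)) with n in H by lia. apply H.
  - rewrite U1_0. ring.
  - intros s Hs. apply flux_deriv. lra.
  - intros s Hs.
    assert (0 <= s ^ (n - 1)) by (apply pow_le; lra).
    assert (k * rpow (u r) p <= K s * rpow (u s) p).
    { assert (k <= K s) by (apply Hk; lra). assert (0 <= K s) by (apply K_ge0; lra).
      assert (0 <= rpow (u r) p) by apply rpow_ge0.
      assert (rpow (u r) p <= rpow (u s) p).
      { apply rpow_le_compat; [left; apply crit_exp_gt0|apply u_nonincreasing; lra]. }
      nra. }
    nra.
Qed.

Lemma u_sub_flux_tail_nonincreasing r x : 0 < r <= x ->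
  u x - flux r / (N - 2) * Rpower x (- (N - 2)) <= u r - flux r / (N - 2) * Rpower r (- (N - 2)).
Proof.
  intros Hrx.
  assert (HN := INR_ge3 n n_ge3).
  set (g := flux r). set (m := N - 2).
  (* the derivative [(g - flux s) / s^(n-1)] is [<= 0] because the flux is nondecreasing *)
  apply (nonincreasing_of_deriv_nonpos (fun s => u s - g / m * Rpower s (- m))
    (fun s => U1 s - g / m * (- m * Rpower s (- m - 1))) r x (proj2 Hrx)).
  - intros c Hc. apply derivable_pt_lim_minus; [apply u_deriv|].
    apply derivable_pt_lim_scale, derivable_pt_lim_power. lra.
  - intros c Hc.
    assert (Hc0 : 0 < c ^ (n - 1)) by (apply pow_lt; lra).
    assert (E : Rpower c (- m - 1) = / c ^ (n - 1)).
    { rewrite <- Rpower_pow, <- Rpower_Ropp by lra. f_equal.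
      unfold m. rewrite minus_INR by lia. simpl. ring. }
    assert (Hflux : g <= flux c) by (apply flux_nondecreasing; lra).
    rewrite E.
    replace (U1 c - g / m * (- m * / c ^ (n - 1))) with ((g - flux c) * / c ^ (n - 1))
      by (unfold m; field; lra).
    assert (0 < / c ^ (n - 1)) by now apply Rinv_0_lt_compat.
    nra.
Qed.

Lemma flux_le_u r : 0 < r -> flux r <= (N - 2) * u r * r ^ (n - 2).
Proof.
  intros Hr.
  assert (HN := INR_ge3 n n_ge3).
  set (g := flux r). set (m := N - 2).
  assert (Hg : 0 <= g) by (apply flux_ge0; lra).
  assert (Hm : 1 <= m) by (unfold m; lra).
  (* the nonincreasing function of [u_sub_flux_tail_nonincreasing] is [>= 0] at infinity *)
  assert (Hr_ge0 : 0 <= u r - g / m * Rpower r (- m)).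
  { destruct (Rle_lt_dec 0 (u r - g / m * Rpower r (- m))) as [|Hneg]; auto.
    assert (Hgm : 0 <= g / m).
    { unfold Rdiv. apply Rmult_le_pos; [lra|left; apply Rinv_0_lt_compat; lra]. }
    destruct (exists_large_Rpower_opp_lt m (g / m) (- (u r - g / m * Rpower r (- m))) r
      Hm Hgm ltac:(lra)) as [x [Hx Hsmall]].
    assert (H := u_sub_flux_tail_nonincreasing r x ltac:(lra)).
    assert (0 <= u x) by (apply u_ge0; lra).
    fold g m in H. lra. }
  assert (Hr0 : 0 < r ^ (n - 2)) by (apply pow_lt; lra).
  assert (E : Rpower r (- m) = / r ^ (n - 2)).
  { rewrite <- Rpower_pow, <- Rpower_Ropp by lra. unfold m. now rewrite INR_sub2. }
  rewrite E in Hr_ge0.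
  apply (Rmult_le_compat_r (m * r ^ (n - 2))) in Hr_ge0; [|nra].
  replace ((u r - g / m * / r ^ (n - 2)) * (m * r ^ (n - 2)))
    with (m * u r * r ^ (n - 2) - g) in Hr_ge0 by (field; lra).
  lra.
Qed.

Lemma flux_deriv_ge k delta : (forall s, 0 <= s <= delta -> k <= K s) ->
  forall s, 0 < s <= delta -> 0 < u s -> 0 < flux s ->
  flux_decay_const n k * Rpower (flux s) p / s <= s ^ (n - 1) * K s * rpow (u s) p.
Proof.
  intros Hk s Hs Hus Hflux. unfold flux_decay_const.
  assert (HN := INR_ge3 n n_ge3).
  assert (Hs2 : 0 < s ^ (n - 2)) by (apply pow_lt; lra).
  assert (Hs1 : 0 < s ^ (n - 1)) by (apply pow_lt; lra).
  assert (Hu : flux s / ((N - 2) * s ^ (n - 2)) <= u s).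
  { assert (H := flux_le_u s ltac:(lra)).
    apply (Rmult_le_reg_r ((N - 2) * s ^ (n - 2))); [nra|].
    unfold Rdiv. rewrite Rmult_assoc, Rinv_l by nra. lra. }
  assert (Hp := crit_exp_gt0).
  assert (Hlow : Rpower (flux s) p * Rpower (N - 2) (- p) * Rpower s (- (INR (n - 2) * p))
    <= Rpower (u s) p).
  { rewrite <- Rpower_div_mul_pow by lra.
    apply Rle_Rpower_l; [lra|]. split; [|exact Hu].
    apply Rdiv_lt_0_compat; nra. }
  replace (INR (n - 2) * p) with N in Hlow by (rewrite INR_sub2 by auto; field; lra).
  assert (Es : s ^ (n - 1) * Rpower s (- N) = / s).
  { rewrite <- Rpower_pow, <- Rpower_plus by lra.
    rewrite minus_INR by lia. replace (N - INR 1 + - N) with (- (1)) by (simpl; ring).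
    rewrite Rpower_Ropp, Rpower_1 by lra. reflexivity. }
  rewrite rpow_Rpower by auto.
  set (low := Rpower (flux s) p * Rpower (N - 2) (- p) * Rpower s (- N)) in Hlow.
  assert (Hlow0 : 0 <= low) by (unfold low; repeat apply Rmult_le_pos; left; apply Rpower_gt0).
  assert (HKs : k <= K s) by (apply Hk; lra).
  assert (HK0 : 0 <= K s) by (apply K_ge0; lra).
  assert (Hkl : k * low <= K s * Rpower (u s) p) by nra.
  replace (k * Rpower (N - 2) (- p) * Rpower (flux s) p / s) with (s ^ (n - 1) * (k * low))
    by (unfold low, Rdiv; rewrite <- Es; ring).
  rewrite Rmult_assoc. apply Rmult_le_compat_l; lra.
Qed.

Lemma flux_pos k delta : 0 < k -> (forall s, 0 <= s <= delta -> k <= K s) ->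
  forall s, 0 < s <= delta -> 0 < u s -> 0 < flux s.
Proof.
  intros Hk HkK s Hs Hus.
  assert (H := flux_ge_local k delta HkK s ltac:(lra)).
  rewrite rpow_Rpower in H by auto.
  assert (0 < s ^ n) by (apply pow_lt; lra).
  assert (0 < N) by (assert (H3 := INR_ge3 n n_ge3); lra).
  assert (0 < k * Rpower (u s) p * s ^ n / N).
  { apply Rdiv_lt_0_compat; auto. repeat apply Rmult_lt_0_compat; auto. apply Rpower_gt0. }
  lra.
Qed.

Local Notation q := (2 / (N - 2)).

Lemma flux_log_estimate k delta : 0 < k -> (forall s, 0 <= s <= delta -> k <= K s) ->
  (forall r, 0 <= r -> 0 < u r) ->
  forall r, 0 < r <= delta ->
  q * flux_decay_const n k * (ln delta - ln r) <= Rpower (flux r) (- q).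
Proof.
  intros Hk HkK Hu r Hr.
  assert (HN := INR_ge3 n n_ge3).
  set (c := flux_decay_const n k).
  assert (Hq : 0 < q) by (apply Rdiv_lt_0_compat; lra).
  assert (Hpq : p = q + 1) by (rewrite INR_sub2 by auto; field; lra).
  assert (Hflux : forall s, 0 < s <= delta -> 0 < flux s).
  { intros s Hs. apply (flux_pos k delta); auto. apply Hu. lra. }
  (* By [flux_deriv_ge] and [p = q + 1], [Phi] is nonincreasing on [[r, delta]]. *)
  set (Phi := fun s => Rpower (flux s) (- q) + q * c * ln s).
  assert (HPhi : Phi delta <= Phi r).
  { apply (nonincreasing_of_deriv_nonpos Phi
      (fun s => - q * Rpower (flux s) (- q - 1) * (s ^ (n - 1) * K s * rpow (u s) p)
                + q * c * / s) r delta ltac:(lra)).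
    - intros s Hs. apply derivable_pt_lim_add.
      + apply (derivable_pt_lim_compose (fun s => flux s) (fun x => Rpower x (- q))).
        * apply flux_deriv. lra.
        * apply derivable_pt_lim_power, Hflux. lra.
      + apply derivable_pt_lim_scale, derivable_pt_lim_ln. lra.
    - intros s Hs.
      assert (G := flux_deriv_ge k delta HkK s ltac:(lra) (Hu s ltac:(lra)) (Hflux s ltac:(lra))).
      fold c in G.
      assert (E : Rpower (flux s) (- q - 1) * Rpower (flux s) p = 1).
      { rewrite <- Rpower_plus, Hpq. replace (- q - 1 + (q + 1)) with 0 by ring.
        apply Rpower_O, Hflux. lra. }
      assert (0 < Rpower (flux s) (- q - 1)) by apply Rpower_gt0.
      apply (Rmult_le_compat_l (q * Rpower (flux s) (- q - 1))) in G; [|nra].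
      replace (q * Rpower (flux s) (- q - 1) * (c * Rpower (flux s) p / s))
        with (q * c * (Rpower (flux s) (- q - 1) * Rpower (flux s) p) * / s) in G
        by (unfold Rdiv; ring).
      rewrite E in G. lra. }
  unfold Phi in HPhi.
  assert (0 < Rpower (flux delta) (- q)) by apply Rpower_gt0.
  lra.
Qed.

Lemma flux_ge_at_half_height B k delta : 0 <= k -> (forall r, 0 <= r -> K r <= B) ->
  (forall s, 0 <= s <= delta -> k <= K s) -> 0 < u 0 ->
  forall rho, 0 <= rho <= delta -> B * rpow (u 0) p * rho ^ 2 = N * u 0 ->
  k * Rpower (u 0 / 2) p * rho ^ n / N <= flux rho.
Proof.
  intros Hk HB HkK Hu0 rho Hrho Erho.
  assert (HN := INR_ge3 n n_ge3).
  assert (Hhalf : u 0 / 2 <= u rho).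
  { assert (H := u_ge_center B HB rho ltac:(lra)).
    rewrite Erho in H. replace (N * u 0 / (2 * N)) with (u 0 / 2) in H by (field; lra). lra. }
  apply Rle_trans with (k * rpow (u rho) p * rho ^ n / N); [|now apply (flux_ge_local k delta)].
  rewrite rpow_Rpower by lra.
  assert (Hpow : Rpower (u 0 / 2) p <= Rpower (u rho) p).
  { apply Rle_Rpower_l; [left; apply crit_exp_gt0|lra]. }
  assert (0 <= rho ^ n) by (apply pow_le; lra).
  unfold Rdiv. apply Rmult_le_compat_r; [left; apply Rinv_0_lt_compat; lra|].
  apply Rmult_le_compat_r; [lra|]. now apply Rmult_le_compat_l.
Qed.

Lemma flux_decay_const_gt0 k : 0 < k -> 0 < flux_decay_const n k.
Proof. intros Hk. apply Rmult_lt_0_compat; [lra|apply Rpower_gt0]. Qed.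

Lemma ln_center_le_of_radius B k delta rho : 0 < B -> (forall r, 0 <= r -> K r <= B) ->
  0 < k -> (forall s, 0 <= s <= delta -> k <= K s) -> (forall r, 0 <= r -> 0 < u r) ->
  0 < rho <= delta -> ln rho = (ln N - ln B - q * ln (u 0)) / 2 ->
  q * ln (u 0) <= ln N - ln B - 2 * ln delta
    + 2 * Rpower (flux_floor n B k) (- q) / (q * flux_decay_const n k).
Proof.
  intros HB0 HB Hk HkK Hu Hrho Hlnrho.
  assert (HN := INR_ge3 n n_ge3).
  set (a := u 0) in *. assert (Ha : 0 < a) by (apply Hu; lra).
  assert (Hq : 0 < q) by (apply Rdiv_lt_0_compat; lra).
  assert (Hpq : p = q + 1) by (rewrite INR_sub2 by auto; field; lra).
  assert (HpN : p = N * q / 2) by (rewrite INR_sub2 by auto; field; lra).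
  assert (E1 : B * rpow a p * rho ^ 2 = N * a).
  { rewrite rpow_Rpower by auto.
    assert (0 < Rpower a p) by apply Rpower_gt0.
    assert (0 < rho ^ 2) by (apply pow_lt; lra).
    apply ln_inv; [repeat apply Rmult_lt_0_compat; lra|nra|].
    rewrite !ln_mult, ln_pow, ln_Rpower, Hlnrho, Hpq by (repeat apply Rmult_lt_0_compat; lra).
    simpl INR. field. lra. }
  assert (E2 : k * Rpower (a / 2) p * rho ^ n / N = flux_floor n B k).
  { unfold flux_floor. f_equal. rewrite !Rmult_assoc. f_equal.
    assert (0 < rho ^ n) by (apply pow_lt; lra).
    assert (Ha2 : ln (a / 2) = ln a + ln (/ 2)) by (apply ln_mult; lra).
    assert (HNB : ln (N / B) = ln N - ln B).
    { unfold Rdiv. rewrite ln_mult, ln_Rinv by (try apply Rinv_0_lt_compat; lra). ring. }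
    apply ln_inv; try (apply Rmult_lt_0_compat; auto; apply Rpower_gt0).
    rewrite !ln_mult, ln_pow, !ln_Rpower, Ha2, HNB, Hlnrho, HpN by (try apply Rpower_gt0; lra).
    field. lra. }
  assert (F := flux_ge_at_half_height B k delta ltac:(lra) HB HkK Ha rho ltac:(lra) E1).
  fold a in F. rewrite E2 in F.
  assert (Hfloor : 0 < flux_floor n B k).
  { apply Rdiv_lt_0_compat; [|lra]. repeat apply Rmult_lt_0_compat; auto; apply Rpower_gt0. }
  assert (Hflux : Rpower (flux rho) (- q) <= Rpower (flux_floor n B k) (- q)).
  { rewrite !Rpower_Ropp. apply Rinv_le_contravar; [apply Rpower_gt0|].
    apply Rle_Rpower_l; lra. }
  assert (L := flux_log_estimate k delta Hk HkK Hu rho Hrho).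
  assert (Hdecay := flux_decay_const_gt0 k Hk).
  assert (Hqc : 0 < q * flux_decay_const n k) by now apply Rmult_lt_0_compat.
  enough (ln delta - ln rho <= Rpower (flux_floor n B k) (- q) / (q * flux_decay_const n k))
    by (unfold Rdiv in *; lra).
  apply (Rmult_le_reg_r (q * flux_decay_const n k)); [lra|].
  replace (Rpower (flux_floor n B k) (- q) / (q * flux_decay_const n k) * (q * flux_decay_const n k))
    with (Rpower (flux_floor n B k) (- q)) by (field; lra).
  lra.
Qed.

Lemma ln_center_le B k delta : 0 < B -> (forall r, 0 <= r -> K r <= B) ->
  0 < k -> 0 < delta -> (forall s, 0 <= s <= delta -> k <= K s) ->
  (forall r, 0 <= r -> 0 < u r) ->
  ln (u 0) <= radial_log_bound n B k delta.
Proof.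
  intros HB0 HB Hk Hd HkK Hu.
  assert (HN := INR_ge3 n n_ge3).
  assert (Hq : 0 < q) by (apply Rdiv_lt_0_compat; lra).
  set (C := 2 * Rpower (flux_floor n B k) (- q) / (q * flux_decay_const n k)).
  assert (HC : 0 < C).
  { apply Rdiv_lt_0_compat; [apply Rmult_lt_0_compat; [lra|apply Rpower_gt0]|].
    apply Rmult_lt_0_compat; auto. now apply flux_decay_const_gt0. }
  enough (Hbound : q * ln (u 0) <= ln N - ln B - 2 * ln delta + C).
  { change (ln (u 0) <= (ln N - ln B - 2 * ln delta + C) / q).
    apply (Rmult_le_reg_l q); [lra|].
    replace (q * ((ln N - ln B - 2 * ln delta + C) / q)) with (ln N - ln B - 2 * ln delta + C)
      by (field; lra).
    lra. }
  (* [rho] solves [B a^p rho^2 = n a] for [a = u 0] *)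
  set (rho := exp ((ln N - ln B - q * ln (u 0)) / 2)).
  assert (Hlnrho : ln rho = (ln N - ln B - q * ln (u 0)) / 2) by apply ln_exp.
  assert (Hrho0 : 0 < rho) by apply exp_pos.
  destruct (Rle_lt_dec rho delta) as [Hrho|Hrho].
  - now apply (ln_center_le_of_radius B k delta rho).
  - assert (ln delta < ln rho) by (apply ln_increasing; lra). lra.
Qed.

Lemma profile_le_bound B k delta beta : 0 < B -> (forall r, 0 <= r -> K r <= B) ->
  0 < k -> 0 < delta -> (forall s, 0 <= s <= delta -> k <= K s) -> 0 < beta ->
  (forall eps, 0 < eps -> exists R0, forall r, 0 <= r -> R0 < r -> Rabs (u r - beta) < eps) ->
  forall r, 0 <= r -> u r <= exp (radial_log_bound n B k delta).
Proof.
  intros HB0 HB Hk Hd HkK Hbeta Hlim r Hr.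
  assert (Hu : forall s, 0 <= s -> 0 < u s).
  { intros s Hs. assert (H := u_ge_limit beta Hlim s Hs). lra. }
  apply Rle_trans with (u 0); [apply u_nonincreasing; lra|].
  rewrite <- (exp_ln (u 0)) by (apply Hu; lra).
  destruct (ln_center_le B k delta HB0 HB Hk Hd HkK Hu) as [Hlt|Heq].
  - left. now apply exp_increasing.
  - rewrite Heq. lra.
Qed.

End RadialProfile.

Definition axis (r : R) : nat -> R := fun j => if Nat.eqb j 0 then r else 0.

Lemma normn_axis n r : (1 <= n)%nat -> normn n (axis r) = Rabs r.
Proof.
  intros Hn. unfold normn. destruct n as [|n]; [lia|]. clear Hn.
  replace (sum_upto (S n) (fun j => axis r j * axis r j)) with (Rsqr r).
  - apply sqrt_Rsqr_abs.
  - unfold Rsqr. induction n as [|n IH].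
    + unfold axis. simpl. ring.
    + simpl sum_upto in *. rewrite <- IH. unfold axis. simpl. ring.
Qed.

Lemma shift_axis r t : shift (axis r) 0 t = axis (r + t).
Proof.
  apply functional_extensionality. intro j. unfold shift, axis.
  now destruct (Nat.eqb j 0).
Qed.

Lemma shift_shift x i t s : shift (shift x i t) i s = shift x i (t + s).
Proof.
  apply functional_extensionality. intro j. unfold shift.
  destruct (Nat.eqb j i); [ring|reflexivity].
Qed.

Lemma derivable_pt_lim_translate f g x l : (forall t, f t = g (x + t)) ->
  derivable_pt_lim f 0 l -> derivable_pt_lim g x l.
Proof.
  intros E D eps Heps. destruct (D eps Heps) as [d Hd]. exists d. intros h Hh Hhd.
  specialize (Hd h Hh Hhd). rewrite !E, Rplus_0_l, Rplus_0_r in Hd. exact Hd.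
Qed.

Lemma has_partial_axis f r l :
  has_partial f 0 (axis r) l -> derivable_pt_lim (fun s => f (axis s)) r l.
Proof.
  apply derivable_pt_lim_translate. intro t. now rewrite shift_axis.
Qed.

Lemma derivable_pt_lim_even_0 (f : R -> R) l : (forall s, f (- s) = f s) ->
  derivable_pt_lim f 0 l -> l = 0.
Proof.
  intros Ev D.
  assert (Dopp : derivable_pt_lim (fun s => f (- s)) 0 (l * -1)).
  { apply (derivable_pt_lim_compose (fun s => - s) f 0 (-1) l).
    - apply derivable_pt_lim_opp, derivable_pt_lim_id.
    - now rewrite Ropp_0. }
  apply (derivable_pt_lim_ext _ f) in Dopp; [|exact Ev].
  assert (E := uniqueness_limite f 0 l (l * -1) D Dopp). lra.
Qed.

Lemma radial_axis n v x : (1 <= n)%nat -> radially_symmetric n v ->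
  v x = v (axis (normn n x)).
Proof.
  intros Hn Hv. apply Hv. rewrite normn_axis, Rabs_right; auto.
  apply Rle_ge, sqrt_pos.
Qed.

Lemma normn_shift_axis n r i t : (1 <= i < n)%nat ->
  normn n (shift (axis r) i t) = sqrt (r * r + t * t).
Proof.
  intros Hi. unfold normn. f_equal.
  assert (H : forall k, (k <= n)%nat -> sum_upto k (fun j => shift (axis r) i t j * shift (axis r) i t j)
    = (if Nat.ltb 0 k then r * r else 0) + (if Nat.ltb i k then t * t else 0)).
  { induction k as [|k IH]; intros Hk; [simpl; ring|].
    simpl sum_upto. rewrite IH by lia. unfold shift, axis.
    destruct (Nat.eqb_spec k i), (Nat.eqb_spec k 0), (Nat.ltb_spec 0 k), (Nat.ltb_spec i k),
      (Nat.ltb_spec 0 (S k)), (Nat.ltb_spec i (S k)); try lia; subst; ring. }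
  rewrite H by lia.
  destruct (Nat.ltb_spec 0 n), (Nat.ltb_spec i n); lia || ring.
Qed.

Lemma derivable_pt_lim_hypot r t : 0 < r ->
  derivable_pt_lim (fun t => sqrt (r * r + t * t)) t (t / sqrt (r * r + t * t)).
Proof.
  intros Hr. assert (Hpos : 0 < sqrt (r * r + t * t)) by (apply sqrt_lt_R0; nra).
  apply (derivable_pt_lim_eq _ _ (/ (2 * sqrt (r * r + t * t)) * (0 + (1 * t + t * 1))));
    [field; lra|].
  apply (derivable_pt_lim_compose (fun t => r * r + t * t) sqrt).
  - apply derivable_pt_lim_add; [apply derivable_pt_lim_const|].
    apply derivable_pt_lim_mul; apply derivable_pt_lim_id.
  - apply derivable_pt_lim_sqrt. nra.
Qed.

Lemma second_partial_axis_transverse n v D1 D2 i r : (1 <= i < n)%nat ->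
  C2n n v D1 D2 -> radially_symmetric n v -> 0 < r ->
  D2 i i (axis r) = D1 0%nat (axis r) / r.
Proof.
  intros Hi [_ [HC1 HC2]] Hv Hr.
  set (u := fun s => v (axis s)). set (U1 := fun s => D1 0%nat (axis s)).
  set (rho := fun t => sqrt (r * r + t * t)).
  assert (Hrho : forall t, 0 < rho t) by (intro; apply sqrt_lt_R0; nra).
  assert (Hu : forall s, derivable_pt_lim u s (U1 s)).
  { intro s. apply has_partial_axis, HC1. lia. }
  assert (HU : forall s, derivable_pt_lim U1 s (D2 0%nat 0%nat (axis s))).
  { intro s. apply has_partial_axis, HC2; lia. }
  (* on the line [r e_0 + t e_i], [v = u (rho t)] *)
  assert (D1_line : forall t, D1 i (shift (axis r) i t) = t * (U1 (rho t) / rho t)).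
  { intro t. destruct (HC1 i ltac:(lia)) as [_ Hp].
    specialize (Hp (shift (axis r) i t)). unfold has_partial in Hp.
    apply (derivable_pt_lim_translate _ (fun tau => u (rho tau)) t) in Hp.
    2: { intro s. rewrite shift_shift. unfold u, rho. rewrite (radial_axis n v) by (auto; lia).
         now rewrite normn_shift_axis. }
    apply (uniqueness_limite (fun tau => u (rho tau)) t); auto.
    apply (derivable_pt_lim_eq _ _ (U1 (rho t) * (t / rho t))); [unfold Rdiv; ring|].
    apply (derivable_pt_lim_compose rho u t); [apply derivable_pt_lim_hypot; lra|apply Hu]. }
  destruct (HC2 i i ltac:(lia) ltac:(lia)) as [_ Hp2].
  specialize (Hp2 (axis r)). unfold has_partial in Hp2.
  apply (derivable_pt_lim_ext _ (fun t => t * (U1 (rho t) / rho t))) in Hp2; [|exact D1_line].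
  assert (Dg : exists l, derivable_pt_lim (fun t => U1 (rho t) / rho t) 0 l).
  { eexists. apply (derivable_pt_lim_div (fun t => U1 (rho t)) rho).
    - apply (derivable_pt_lim_compose rho U1); [apply derivable_pt_lim_hypot; lra|apply HU].
    - apply derivable_pt_lim_hypot. lra.
    - apply Rgt_not_eq, Hrho. }
  destruct Dg as [l Dg].
  assert (Dprod := derivable_pt_lim_mul (fun t => t) _ 0 1 l (derivable_pt_lim_id 0) Dg).
  rewrite (uniqueness_limite _ 0 _ _ Hp2 Dprod).
  unfold rho. rewrite Rmult_0_r, Rplus_0_r, sqrt_square by lra. unfold U1. ring.
Qed.

Lemma laplacian_axis n v D1 D2 r : (1 <= n)%nat -> C2n n v D1 D2 -> radially_symmetric n v ->
  0 < r -> laplacian n D2 (axis r) = D2 0%nat 0%nat (axis r) + (INR n - 1) * D1 0%nat (axis r) / r.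
Proof.
  intros Hn HC Hv Hr. unfold laplacian.
  assert (H : forall k, (S k <= n)%nat -> sum_upto (S k) (fun i => D2 i i (axis r)) =
    D2 0%nat 0%nat (axis r) + INR k * D1 0%nat (axis r) / r).
  { induction k as [|k IH]; intros Hk; [simpl; field; lra|].
    change (sum_upto (S (S k)) (fun i => D2 i i (axis r))) with
      (sum_upto (S k) (fun i => D2 i i (axis r)) + D2 (S k) (S k) (axis r)).
    rewrite IH, (second_partial_axis_transverse n v D1 D2 (S k) r) by (auto; lia).
    rewrite S_INR. field. lra. }
  destruct n as [|n]; [lia|]. rewrite H by lia. rewrite S_INR. field. lra.
Qed.

Lemma radial_profile_deriv_0 n v D1 D2 : (1 <= n)%nat -> C2n n v D1 D2 ->
  radially_symmetric n v -> D1 0%nat (axis 0) = 0.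
Proof.
  intros Hn [_ [HC1 _]] Hv.
  apply (derivable_pt_lim_even_0 (fun s => v (axis s))).
  - intro s. apply Hv. now rewrite !normn_axis, Rabs_Ropp.
  - apply has_partial_axis, HC1. lia.
Qed.

Lemma radial_profile_ode n K v D1 D2 p : (1 <= n)%nat -> C2n n v D1 D2 ->
  radially_symmetric n v ->
  (forall x, laplacian n D2 x + K (normn n x) * rpow (v x) p = 0) ->
  forall r, 0 < r ->
  D2 0%nat 0%nat (axis r) + (INR n - 1) * D1 0%nat (axis r) / r + K r * rpow (v (axis r)) p = 0.
Proof.
  intros Hn HC Hv Hode r Hr.
  assert (Hnorm : normn n (axis r) = r) by (rewrite normn_axis by auto; apply Rabs_right; lra).
  specialize (Hode (axis r)).
  now rewrite Hnorm, (laplacian_axis n v D1 D2 r) in Hode.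
Qed.

Lemma lower_bound_near_0 (f : R -> R) :
  (forall r eps, 0 <= r -> 0 < eps -> exists delta, 0 < delta /\
     forall s, 0 <= s -> Rabs (s - r) < delta -> Rabs (f s - f r) < eps) ->
  0 < f 0 -> exists delta, 0 < delta /\ forall s, 0 <= s <= delta -> f 0 / 2 <= f s.
Proof.
  intros Hf Hf0.
  destruct (Hf 0 (f 0 / 2) (Rle_refl 0) ltac:(lra)) as [d [Hd Hclose]].
  exists (d / 2). split; [lra|]. intros s Hs.
  assert (Hs0 : Rabs (s - 0) < d) by (rewrite Rminus_0_r, Rabs_right; lra).
  specialize (Hclose s (proj1 Hs) Hs0). apply Rabs_def2 in Hclose. lra.
Qed.

Theorem proposition7p2 (n : nat) (Hn : (3 <= n)%nat) (K0 : R -> R)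
  (HK0nonneg : forall r, 0 <= r -> 0 <= K0 r)
  (HK0bdd : exists B, forall r, 0 <= r -> K0 r <= B)
  (HK0cont : forall r eps, 0 <= r -> 0 < eps -> exists delta, 0 < delta /\
      forall s, 0 <= s -> Rabs (s - r) < delta -> Rabs (K0 s - K0 r) < eps)
  (HK00 : 0 < K0 0) :
  exists M, 0 < M /\
    forall (v : (nat -> R) -> R) (D1 : nat -> (nat -> R) -> R)
           (D2 : nat -> nat -> (nat -> R) -> R) (beta : R),
      0 < beta ->
      C2n n v D1 D2 ->
      radially_symmetric n v ->
      (forall x, 0 <= v x) ->
      (forall x, laplacian n D2 x
                 + K0 (normn n x) * rpow (v x) (INR n / INR (n - 2)) = 0) ->
      (forall eps, 0 < eps -> exists R0, forall x,
          R0 < normn n x -> Rabs (v x - beta) < eps) ->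
      forall x, v x <= M.
Proof.
  destruct HK0bdd as [B HB].
  assert (HB0 : 0 < B) by (specialize (HB 0 (Rle_refl 0)); lra).
  destruct (lower_bound_near_0 K0 HK0cont HK00) as [delta [Hdelta HK0delta]].
  exists (exp (radial_log_bound n B (K0 0 / 2) delta)). split; [apply exp_pos|].
  intros v D1 D2 beta Hbeta HC Hv Hv0 Hode Hlim x.
  assert (Hn1 : (1 <= n)%nat) by lia.
  assert (HC' := HC). destruct HC' as [_ [HC1 HC2]].
  rewrite (radial_axis n v x Hn1 Hv).
  apply (profile_le_bound n K0 (fun s => v (axis s)) (fun s => D1 0%nat (axis s))
    (fun s => D2 0%nat 0%nat (axis s)) Hn HK0nonneg) with (beta := beta); auto; try lra.
  - intro s. apply has_partial_axis, HC1. lia.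
  - intro s. apply has_partial_axis, HC2; lia.
  - now apply (radial_profile_deriv_0 n v D1 D2).
  - now apply (radial_profile_ode n K0 v D1 D2).
  - intros eps Heps. destruct (Hlim eps Heps) as [R0 HR0]. exists R0. intros r Hr HRr.
    apply HR0. now rewrite normn_axis, Rabs_right by (auto; lra).
  - apply sqrt_pos.
Qed.
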